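(* Fix $T\ge1$, $N_s\ge1$ storage devices, $N\ge 1$ net-capacity-surplus profiles $(P_t(k))_{t=1}^T$, and initial states of charge $S_{i,0}\ge 0$. For parameters $\overline{S}_i\ge S_{i,0}$, $\overline{x}_i\ge 0$ ($i=1,\dots,N_s$), let $v_k$ be the optimal value of problem (P2) for profile $k$ and $\mathrm{EUE}=\frac1N\sum_{k=1}^N\big(\sum_t p_t^-(k)+v_k\big)$. Then (P2) is always feasible, and for any device $i$, if its qualified capacity is $\overline{S}_i$, or $\overline{x}_i$, or more generally the parameters $(\overline{S}_i,\overline{x}_i)$ move along a ray $(\overline{S}_i^0+a\theta,\overline{x}_i^0+b\theta)$, $\theta\ge0$, $a,b\ge0$, $(a,b)\ne(0,0)$, with all other parameters fixed, then EUE as a function of this parameter is continuous, piecewise linear, and non-increasing; in particular the MRI $=-\partial\mathrm{EUE}/\partial\mathrm{QC}$ of device $i$ is non-negative wherever it exists, regardless of the profiles.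
   Context: For real $P_t$ (net capacity surplus at hour $t$), $p_t^+=\max\{P_t,0\}$, $p_t^-=\max\{-P_t,0\}$. Problem (P2) (multiple storage devices under reliability dispatch, no cross-charging): minimize over $S_{i,t}$ ($i=1,\dots,N_s$, $t=1,\dots,T$) $$\sum_{t=1}^T\min\Big\{0,\sum_{i=1}^{N_s}(S_{i,t}-S_{i,t-1})\Big\}$$ subject to, for all $i,t$: $0\le S_{i,t}\le\overline{S}_i$ (multipliers $\lambda_{i,1t},\lambda_{i,2t}$); $-\overline{x}_i\le S_{i,t}-S_{i,t-1}\le\overline{x}_i$ (multipliers $\lambda_{i,3t},\lambda_{i,4t}$); $-p_t^-\le S_{i,t}-S_{i,t-1}\le p_t^+$ (multipliers $\lambda_{i,5t},\lambda_{i,6t}$); and for all $t$: $-p_t^-\le\sum_i(S_{i,t}-S_{i,t-1})\le p_t^+$ (multipliers $\lambda_{7t},\lambda_{8t}$). The $S_{i,0}$ are given constants. Profiles are equally likely. *)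

From HB Require Import structures.
From mathcomp Require Import all_boot all_order all_algebra.
From mathcomp Require Import all_classical all_reals all_analysis.
Set Implicit Arguments. Unset Strict Implicit. Unset Printing Implicit Defensive.
Import Order.TTheory GRing.Theory Num.Theory.
Import numFieldNormedType.Exports.
Local Open Scope classical_set_scope.
Local Open Scope ring_scope.

Section P2.
Variable R : realType.

Definition pplus (x : R) : R := Num.max x 0.
Definition pminus (x : R) : R := Num.max (- x) 0.

(* A schedule: s i t = S_{i,t}; only t = 0..T matter; s i 0 must be the
   given initial state S0 i.  Pt : nat -> R is the profile (P_t)_{t=1..T}. *)
Definition feasibleP2 (T Ns : nat) (S0 Sbar xbar : 'I_Ns -> R)
    (Pt : nat -> R) (s : 'I_Ns -> nat -> R) : Prop :=
  (forall i, s i 0%N = S0 i) /\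
  forall t : nat, (1 <= t <= T)%N ->
    (forall i : 'I_Ns,
        (0 <= s i t /\ s i t <= Sbar i) /\
        (- xbar i <= s i t - s i t.-1 /\ s i t - s i t.-1 <= xbar i) /\
        (- pminus (Pt t) <= s i t - s i t.-1 /\
         s i t - s i t.-1 <= pplus (Pt t))) /\
    - pminus (Pt t) <= \sum_(i < Ns) (s i t - s i t.-1) /\
    \sum_(i < Ns) (s i t - s i t.-1) <= pplus (Pt t).

Definition objP2 (T Ns : nat) (s : 'I_Ns -> nat -> R) : R :=
  \sum_(1 <= t < T.+1) Num.min 0 (\sum_(i < Ns) (s i t - s i t.-1)).

Definition optP2 (T Ns : nat) (S0 Sbar xbar : 'I_Ns -> R) (Pt : nat -> R) : R :=
  inf [set objP2 T s | s in feasibleP2 T S0 Sbar xbar Pt].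

Definition EUE (T Ns N : nat) (S0 Sbar xbar : 'I_Ns -> R)
    (P : 'I_N -> nat -> R) : R :=
  (N%:R)^-1 * \sum_(k < N)
     (\sum_(1 <= t < T.+1) pminus (P k t) + optP2 T S0 Sbar xbar (P k)).

Definition along (Ns : nat) (p0 : 'I_Ns -> R) (i : 'I_Ns) (c theta : R)
  : 'I_Ns -> R :=
  fun j => if j == i then p0 j + c * theta else p0 j.

(* f is piecewise linear (affine) on [0, +oo): finitely many breakpoints
   0 < b_1 < ... < b_m, and f is affine on each of [0,b_1], [b_1,b_2], ...,
   [b_m, +oo). *)
Definition piecewise_linear_nonneg (f : R -> R) : Prop :=
  exists bs : seq R,
    path Order.lt 0 bs /\
    forall j : nat, (j <= size bs)%N ->
      exists c d : R, forall th : R,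
        nth 0 (0 :: bs) j <= th ->
        ((j < size bs)%N -> th <= nth 0 (0 :: bs) j.+1) ->
        f th = c * th + d.

End P2.

From HB Require Import structures.
From mathcomp Require Import all_boot all_order all_algebra.
From mathcomp Require Import all_classical all_reals all_analysis.
From mathcomp Require Import ring lra.
From Stdlib Require List.
Import Order.TTheory GRing.Theory Num.Theory.
Import numFieldNormedType.Exports.
Local Open Scope classical_set_scope.
Local Open Scope ring_scope.

Set Implicit Arguments.
Unset Strict Implicit.
Unset Printing Implicit Defensive.

(* Along a ray th |-> (Sbar0 + th dS, xbar0 + th dx) with dS, dx >= 0, problem
   (P2) is a linear program in which th only enters right-hand sides: on
   feasible schedules the aggregate constraint makes min{0, sum_i D_{i,t}}, with
   D_{i,t} = S_{i,t} - S_{i,t-1}, equal to sum_i D_{i,t} when P_t <= 0 and to 0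
   otherwise.  Eliminating the
   schedule variables from "feasible and objective <= z" by Fourier-Motzkin
   leaves finitely many linear inequalities in (th, z), so on th >= 0 the
   optimal value is the maximum of finitely many affine functions of th; such a
   function is Lipschitz and piecewise linear.  Feasible sets grow with th, so
   the optimal value does not increase, and EUE is a nonnegative combination of
   optimal values plus constants.  Feasibility is witnessed by the idle
   schedule S_{i,t} = S_{i,0}. *)

Lemma In_mem (X : eqType) (y : X) (s : seq X) : List.In y s <-> y \in s.
Proof.
elim: s => [//|a s IH] /=; rewrite inE; split.
  by move=> [->|/IH ->]; rewrite ?eqxx ?orbT.
by move=> /orP [/eqP ->|/IH]; [left|right].
Qed.

Section ListExtrema.
Variables (R : realDomainType) (X : Type).

Lemma exists_lbound (B : list X) (u : X -> R) :
  exists y, forall p, List.In p B -> y <= u p.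
Proof.
elim: B => [|p0 B [y Hy]]; first by exists 0.
exists (Num.min (u p0) y) => p /= [<-|Hp]; rewrite ge_min ?lexx //.
by rewrite Hy ?orbT.
Qed.

Lemma exists_between (A B : list X) (l u : X -> R) :
  (forall q p, List.In q A -> List.In p B -> l q <= u p) ->
  exists y, (forall q, List.In q A -> l q <= y) /\ (forall p, List.In p B -> y <= u p).
Proof.
elim: A => [|q0 A IH] lu.
  by have [y Hy] := exists_lbound B u; exists y.
have [|y [lA uB]] := IH; first by move=> q p qA pB; apply: lu => //=; right.
exists (Num.max (l q0) y); split.
  by move=> q /= [<-|qA]; rewrite le_max ?lexx // lA ?orbT.
by move=> p pB; rewrite ge_max uB // andbT; apply: lu => //=; left.
Qed.

End ListExtrema.

Lemma seq_argmax (R : realDomainType) (X : eqType) (u : X -> R) (s : seq X) :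
  s != [::] -> exists2 x, x \in s & forall y, y \in s -> u y <= u x.
Proof.
case: s => // x0 s _; elim: s x0 => [|x1 s IH] x0.
  by exists x0; rewrite ?inE // => y; rewrite inE => /eqP ->.
have [xm xm_in xm_max] := IH x1.
have [le_x0|lt_xm] := leP (u x0) (u xm).
  exists xm; first by rewrite inE xm_in orbT.
  by move=> y; rewrite inE => /orP [/eqP ->|/xm_max].
exists x0; first by rewrite inE eqxx.
move=> y; rewrite inE => /orP [/eqP -> //|/xm_max le_y].
exact: le_trans le_y (ltW lt_xm).
Qed.

(** * Fourier-Motzkin elimination *)

Section FourierMotzkin.
Variables (R : realFieldType) (V : eqType).

Record lincon := LinCon { coef : V -> R; coef_th : R; coef_z : R; bound : R }.

Definition linform (vs : seq V) (a x : V -> R) : R := \sum_(w <- vs) a w * x w.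

Definition lincon_sat vs c th z x : bool :=
  linform vs (coef c) x + coef_th c * th + coef_z c * z <= bound c.

Definition system_sat vs L th z x : Prop :=
  forall c, List.In c L -> lincon_sat vs c th z x.

Lemma linform_nil a x : linform [::] a x = 0.
Proof. by rewrite /linform big_nil. Qed.

Lemma linform_cons v vs a x : linform (v :: vs) a x = a v * x v + linform vs a x.
Proof. by rewrite /linform big_cons. Qed.

Lemma linform_eta v vs a x y : v \notin vs ->
  linform vs a [eta x with v |-> y] = linform vs a x.
Proof.
move=> vNvs; apply: eq_big_seq => w w_in /=.
by case: eqP => // wv; move: vNvs; rewrite -wv w_in.
Qed.

Lemma linformD vs a b x :
  linform vs (fun w => a w + b w) x = linform vs a x + linform vs b x.
Proof. by rewrite /linform -big_split; apply: eq_bigr => w _; rewrite mulrDl. Qed.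

Lemma linformZ vs k a x : linform vs (fun w => k * a w) x = k * linform vs a x.
Proof. by rewrite /linform mulr_sumr; apply: eq_bigr => w _; rewrite mulrA. Qed.

Lemma linformN vs a x : linform vs (fun w => - a w) x = - linform vs a x.
Proof. by rewrite /linform -sumrN; apply: eq_bigr => w _; rewrite mulNr. Qed.

Lemma linformB vs a b x :
  linform vs (fun w => a w - b w) x = linform vs a x - linform vs b x.
Proof. by rewrite (linformD vs a (fun w => - b w)) linformN. Qed.

Lemma linform_sum (I : Type) (r : seq I) vs (F : I -> V -> R) x :
  linform vs (fun w => \sum_(j <- r) F j w) x = \sum_(j <- r) linform vs (F j) x.
Proof. by rewrite /linform exchange_big; apply: eq_bigr => w _; rewrite mulr_suml. Qed.

Lemma system_sat_cons vs c L th z x :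
  system_sat vs (c :: L) th z x = (lincon_sat vs c th z x /\ system_sat vs L th z x).
Proof.
apply/propext; split=> [sat|[c_sat L_sat] d /= [<-|/L_sat//]] //.
by split=> [|d dL]; apply: sat => /=; [left|right].
Qed.

Lemma system_sat_nil vs th z x : system_sat vs [::] th z x = True.
Proof. by apply/propext; split=> // _ c []. Qed.

Lemma system_sat_cat vs L1 L2 th z x :
  system_sat vs (L1 ++ L2) th z x = (system_sat vs L1 th z x /\ system_sat vs L2 th z x).
Proof.
apply/propext; split=> [sat|[sat1 sat2] c /List.in_app_iff [] ?]; last 2 first.
- exact: sat1.
- exact: sat2.
by split=> c cL; apply: sat; apply/List.in_app_iff; [left|right].
Qed.

Lemma system_sat_flat_map (I : eqType) (s : seq I) (F : I -> seq lincon) vs th z x :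
  system_sat vs (List.flat_map F s) th z x =
  (forall i, i \in s -> system_sat vs (F i) th z x).
Proof.
apply/propext; split=> [sat i /In_mem i_s c cF|sat c /List.in_flat_map [i [/In_mem i_s cF]]].
  by apply: sat; apply/List.in_flat_map; exists i.
exact: sat i_s c cF.
Qed.

Definition slack vs c th z x : R :=
  bound c - coef_th c * th - coef_z c * z - linform vs (coef c) x.

Lemma slack_ge0 vs c th z x : (0 <= slack vs c th z x) = lincon_sat vs c th z x.
Proof. by rewrite /slack /lincon_sat; apply/idP/idP => ?; lra. Qed.

Lemma slack_cons v vs c th z x :
  slack (v :: vs) c th z x = slack vs c th z x - coef c v * x v.
Proof. by rewrite /slack linform_cons; ring. Qed.

Definition lincon_scale k c : lincon :=
  LinCon (fun w => k * coef c w) (k * coef_th c) (k * coef_z c) (k * bound c).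

Definition lincon_add c d : lincon :=
  LinCon (fun w => coef c w + coef d w) (coef_th c + coef_th d)
         (coef_z c + coef_z d) (bound c + bound d).

Definition fm_combine v p q : lincon :=
  lincon_add (lincon_scale (- coef q v) p) (lincon_scale (coef p v) q).

Definition fm_step v L : seq lincon :=
  List.filter (fun c => coef c v == 0) L ++
  List.flat_map (fun p => List.map (fm_combine v p) (List.filter (fun c => coef c v < 0) L))
     (List.filter (fun c => 0 < coef c v) L).

Fixpoint fm_elim vs L : seq lincon :=
  if vs is v :: vs' then fm_elim vs' (fm_step v L) else L.

Lemma fm_combine_sat v vs p q th z x :
  lincon_sat vs (fm_combine v p q) th z x =
  (0 <= - coef q v * slack vs p th z x + coef p v * slack vs q th z x).
Proof.
rewrite /lincon_sat /slack /= linformD !linformZ.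
by apply/idP/idP => ?; lra.
Qed.

Lemma fm_step_sat v vs L th z x :
  system_sat (v :: vs) L th z x -> system_sat vs (fm_step v L) th z x.
Proof.
move=> sat c /List.in_app_iff [/List.filter_In [cL /eqP cv0]|
  /List.in_flat_map [p [/List.filter_In [pL pv]] /List.in_map_iff
     [q [<- /List.filter_In [qL qv]]]]].
  by have := sat c cL; rewrite -!slack_ge0 slack_cons cv0 mul0r subr0.
have := sat p pL; have := sat q qL; rewrite fm_combine_sat -!slack_ge0 !slack_cons.
set sp := slack vs p _ _ _; set sq := slack vs q _ _ _ => hq hp.
have -> : - coef q v * sp + coef p v * sq =
  - coef q v * (sp - coef p v * x v) + coef p v * (sq - coef q v * x v) by ring.
by rewrite addr_ge0 // mulr_ge0 // ?oppr_ge0 ?ltW.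
Qed.

Lemma lincon_sat_eta v vs c th z x y : v \notin vs ->
  lincon_sat (v :: vs) c th z [eta x with v |-> y] = (y * coef c v <= slack vs c th z x).
Proof.
move=> vNvs; rewrite -slack_ge0 slack_cons /= eqxx.
by rewrite /slack linform_eta // subr_ge0 mulrC.
Qed.

Lemma fm_combine_ratio v vs p q th z x : coef q v < 0 < coef p v ->
  lincon_sat vs (fm_combine v p q) th z x ->
  slack vs q th z x / coef q v <= slack vs p th z x / coef p v.
Proof.
move=> /andP [qv pv]; rewrite fm_combine_sat ler_pdivlMr // mulrAC ler_ndivrMr //.
by move=> ?; lra.
Qed.

(* A value of [x v] between the bounds imposed by the constraints where [v] has
   a negative and a positive coefficient works; [fm_combine_ratio] says that
   these bounds are compatible. *)
Lemma fm_step_lift v vs L th z x : v \notin vs ->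
  system_sat vs (fm_step v L) th z x ->
  exists y, system_sat (v :: vs) L th z [eta x with v |-> y].
Proof.
move=> vNvs sat.
pose ratio c := slack vs c th z x / coef c v.
have [|y [ylo yhi]] := @exists_between _ _ (List.filter (fun c => coef c v < 0) L)
    (List.filter (fun c => 0 < coef c v) L) ratio ratio.
  move=> q p /List.filter_In [qL qv] /List.filter_In [pL pv].
  rewrite /ratio fm_combine_ratio ?qv //; apply: sat.
  apply/List.in_app_iff; right; apply/List.in_flat_map; exists p.
  by split; [apply/List.filter_In|apply/List.in_map_iff; exists q; rewrite List.filter_In].
exists y => c cL; rewrite lincon_sat_eta //.
have [cv|cv|cv] := ltgtP (coef c v) 0.
- by rewrite -ler_ndivrMr //; apply: ylo; apply/List.filter_In.
- by rewrite -ler_pdivlMr //; apply: yhi; apply/List.filter_In.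
- rewrite cv mulr0 slack_ge0; apply: sat.
  by apply/List.in_app_iff; left; apply/List.filter_In; rewrite cv eqxx.
Qed.

Lemma fm_elim_sat vs L th z : uniq vs ->
  (exists x, system_sat vs L th z x) <-> (exists x, system_sat [::] (fm_elim vs L) th z x).
Proof.
elim: vs L => [//|v vs IH] L /= /andP [vNvs vs_uniq].
rewrite -IH //; split=> [[x sat]|[x sat]].
  by exists x; apply: fm_step_sat.
by have [y sat'] := fm_step_lift vNvs sat; exists [eta x with v |-> y].
Qed.

End FourierMotzkin.

(** * Maxima of finitely many lines *)

Section MaxAffine.
Variable R : realType.

Definition aff (p : R * R) (th : R) : R := p.1 * th + p.2.

Definition max_of_lines (f : R -> R) (l : seq (R * R)) : Prop :=
  (forall th, 0 <= th -> forall p, p \in l -> aff p th <= f th) /\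
  (forall th, 0 <= th -> exists2 p, p \in l & f th = aff p th).

Definition max_affine (f : R -> R) : Prop := exists l, max_of_lines f l.

Lemma max_affine_eq f g : (forall th, 0 <= th -> f th = g th) ->
  max_affine f -> max_affine g.
Proof.
move=> fg [l [f_ge f_eq]]; exists l; split=> th th_ge0; rewrite -fg //.
  exact: f_ge.
exact: f_eq.
Qed.

Lemma max_affine_cst c : max_affine (fun=> c).
Proof.
exists [:: (0, c)]; split=> [th _ p|th _]; last by exists (0, c); rewrite ?inE // /aff mul0r add0r.
by rewrite inE => /eqP ->; rewrite /aff mul0r add0r.
Qed.

Lemma max_affine_add f g : max_affine f -> max_affine g ->
  max_affine (fun th => f th + g th).
Proof.
move=> [lf [f_ge f_eq]] [lg [g_ge g_eq]].
pose addl (p q : R * R) := (p.1 + q.1, p.2 + q.2).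
have aff_add p q th : aff (addl p q) th = aff p th + aff q th.
  by rewrite /aff /=; ring.
exists [seq addl p q | p <- lf, q <- lg]; split=> th th_ge0.
  move=> r /allpairsP [[p q] [/= p_in q_in ->]].
  by rewrite aff_add lerD ?f_ge ?g_ge.
have [p p_in ->] := f_eq th th_ge0; have [q q_in ->] := g_eq th th_ge0.
by exists (addl p q); [exact: allpairs_f | rewrite aff_add].
Qed.

Lemma max_affine_scale k f : 0 <= k -> max_affine f -> max_affine (fun th => k * f th).
Proof.
move=> k_ge0 [l [f_ge f_eq]].
pose scalel (p : R * R) := (k * p.1, k * p.2).
have aff_scale p th : aff (scalel p) th = k * aff p th by rewrite /aff /=; ring.
exists (map scalel l); split=> th th_ge0.
  by move=> r /mapP [p p_in ->]; rewrite aff_scale ler_wpM2l ?f_ge.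
have [p p_in ->] := f_eq th th_ge0.
by exists (scalel p); [exact: map_f | rewrite aff_scale].
Qed.

Lemma max_affine_sum (I : Type) (r : seq I) (F : I -> R -> R) :
  (forall i, max_affine (F i)) -> max_affine (fun th => \sum_(i <- r) F i th).
Proof.
move=> F_max; elim: r => [|i r IH].
  by apply: (max_affine_eq _ (max_affine_cst 0)) => th _; rewrite big_nil.
by apply: (max_affine_eq _ (max_affine_add (F_max i) IH)) => th _; rewrite big_cons.
Qed.

Lemma max_of_lines_lipschitz f l x y : max_of_lines f l -> 0 <= x -> 0 <= y ->
  `|f x - f y| <= (\sum_(p <- l) `|p.1|) * `|x - y|.
Proof.
move=> [f_ge f_eq].
have slope_le p : p \in l -> `|p.1| <= \sum_(q <- l) `|q.1|.
  by move=> p_in; rewrite (big_rem p) //= lerDl sumr_ge0.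
suff sub_le u v : 0 <= u -> 0 <= v -> f u - f v <= (\sum_(p <- l) `|p.1|) * `|u - v|.
  move=> x_ge0 y_ge0; rewrite ler_norml sub_le // andbT lerNl opprB distrC.
  exact: sub_le.
move=> u_ge0 v_ge0; have [p p_in ->] := f_eq u u_ge0.
have := f_ge v v_ge0 p p_in; rewrite /aff => le_v.
apply: (@le_trans _ _ (p.1 * (u - v))); first lra.
by rewrite (le_trans (ler_norm _)) // normrM ler_wpM2r ?slope_le.
Qed.

(* Composing with the 1-Lipschitz map [th |-> `|th|] extends [f] from [0, +oo)
   to a globally Lipschitz function. *)
Lemma max_affine_continuous f : max_affine f ->
  {within [set th : R | 0 <= th], continuous f}.
Proof.
move=> [l fl]; set C := \sum_(p <- l) `|p.1|.
have C_ge0 : 0 <= C by rewrite sumr_ge0.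
pose g (th : R) := f `|th|.
have g_lip (x y : R) : `|g x - g y| <= C * `|x - y|.
  rewrite (le_trans (max_of_lines_lipschitz fl (normr_ge0 x) (normr_ge0 y))) //.
  by rewrite ler_wpM2l // ler_dist_dist.
have g_cont : continuous g.
  move=> x; apply/cvgrPdist_lt => e e_gt0; apply/nbhs_ballP.
  exists (e / (C + 1)); first by rewrite /= divr_gt0 // ltr_wpDl.
  move=> y; rewrite /ball /= ltr_pdivlMr ?ltr_wpDl // => xy_lt.
  by rewrite (le_lt_trans (g_lip x y)) // (le_lt_trans _ xy_lt) // mulrC ler_wpM2l ?lerDl.
apply: (subspace_eq_continuous _ (continuous_subspaceT g_cont)) => th.
by rewrite inE /= /g /from_subspace /= => /ger0_norm ->.
Qed.

Definition crossing (p q : R * R) : R := (q.2 - p.2) / (p.1 - q.1).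

Lemma crossing_between p q th m : aff p th < aff q th -> aff q m <= aff p m ->
  (th < crossing p q <= m) || (m <= crossing p q < th).
Proof.
rewrite /aff => lt_th le_m.
have slope_neq : p.1 - q.1 != 0 by apply/eqP => e; nra.
have cross_eq : (p.1 - q.1) * crossing p q = q.2 - p.2.
  by rewrite /crossing mulrC divfK.
have [slope_lt0|slope_gt0|] := ltgtP (p.1 - q.1) 0; last by move/eqP: slope_neq.
- by apply/orP; right; apply/andP; split; nra.
- by apply/orP; left; apply/andP; split; nra.
Qed.

Lemma sorted_pos_path (s : seq R) :
  path <%R 0 (sort <=%R (undup [seq r <- s | 0 < r])).
Proof.
rewrite path_min_sorted; last first.
  by apply/allP => r; rewrite mem_sort mem_undup mem_filter => /andP [].
by rewrite lt_sorted_uniq_le sort_uniq undup_uniq sort_le_sorted.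
Qed.

Lemma path_nth_gap (bs : seq R) j r : path <%R 0 bs -> (j <= size bs)%N -> r \in bs ->
  (r <= nth 0 (0 :: bs) j) || (j < size bs)%N && (nth 0 (0 :: bs) j.+1 <= r).
Proof.
move=> bs_lt j_le r_in.
have le_sorted : sorted <=%R (0 :: bs) by apply: sub_path bs_lt => ? ? /ltW.
have r_nth : r = nth 0 (0 :: bs) (index r bs).+1 by rewrite /= nth_index.
have r_idx : (index r bs < size bs)%N by rewrite index_mem.
have [j_le_idx|idx_lt_j] := leqP j (index r bs).
  have j_lt : (j < size bs)%N := leq_ltn_trans j_le_idx r_idx.
  rewrite j_lt andTb; apply/orP; right; rewrite [X in _ <= X]r_nth.
  by apply: (sorted_leq_nth le_trans lexx 0 le_sorted); rewrite ?inE /= ?ltnS.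
apply/orP; left; rewrite [X in X <= _]r_nth.
by apply: (sorted_leq_nth le_trans lexx 0 le_sorted); rewrite ?inE /= ?ltnS.
Qed.

(* The breakpoints are the positive crossings of pairs of lines: between two
   consecutive ones, the line attaining the maximum at an interior point attains
   it on the whole piece. *)
Lemma max_affine_piecewise_linear f : max_affine f -> piecewise_linear_nonneg f.
Proof.
move=> [l [f_ge f_eq]].
set bs := sort <=%R (undup [seq r <- [seq crossing p q | p <- l, q <- l] | 0 < r]).
have bs_path : path <%R 0 bs := sorted_pos_path _.
have bs_sorted : sorted <=%R (0 :: bs) by apply: sub_path bs_path => ? ? /ltW.
exists bs; split=> // j j_le.
set lo := nth 0 (0 :: bs) j; set hi := nth 0 (0 :: bs) j.+1.
have lo_ge0 : 0 <= lo.
  change (nth 0 (0 :: bs) 0 <= lo).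
  by apply: (sorted_leq_nth le_trans lexx 0 bs_sorted); rewrite ?inE /= ?ltnS.
have lo_hi : (j < size bs)%N -> lo < hi.
  by move=> j_lt; apply: (sorted_ltn_nth lt_trans 0 (bs_path : sorted <%R (0 :: bs))); rewrite ?inE /= ?ltnS.
pose m := if (j < size bs)%N then (lo + hi) / 2 else lo + 1.
have lo_m : lo < m by rewrite /m; case: ifP => [/lo_hi|_]; lra.
have m_hi : (j < size bs)%N -> m < hi.
  by move=> j_lt; rewrite /m j_lt; have := lo_hi j_lt; lra.
have m_ge0 : 0 <= m by lra.
have [p p_in fm] := f_eq m m_ge0.
exists p.1, p.2 => th lo_th th_hi; have th_ge0 : 0 <= th by lra.
rewrite -/(aff p th); apply/eqP; rewrite eq_le f_ge // andbT.
have [q q_in ->] := f_eq th th_ge0; rewrite leNgt; apply/negP => lt_th.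
have le_m : aff q m <= aff p m by rewrite -fm f_ge.
have cross := crossing_between lt_th le_m.
have cross_lo : lo < crossing p q by case/orP: cross => /andP [? ?]; lra.
have cross_hi : (j < size bs)%N -> crossing p q < hi.
  by move=> j_lt; have := th_hi j_lt; have := m_hi j_lt; case/orP: cross => /andP [? ?]; lra.
have cross_in : crossing p q \in bs.
  rewrite mem_sort mem_undup mem_filter (allpairs_f crossing p_in q_in) andbT; lra.
case/orP: (path_nth_gap bs_path j_le cross_in) => [|/andP [/cross_hi cross_lt]].
  by rewrite leNgt cross_lo.
by rewrite leNgt cross_lt.
Qed.

Lemma nonincreasing_derive1_le0 (f : R -> R) x : 0 < x -> derivable f x 1 ->
  (forall a b, 0 <= a -> a <= b -> f b <= f a) -> derive1 f x <= 0.
Proof.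
move=> x_gt0 df f_dec; apply: limr_le.
  under eq_fun; first (move=> h; rewrite -{2}(scaler1 h); over).
  exact: df.
near=> h.
have h_neq0 : h != 0 by near: h; exact: nbhs_dnbhs_neq.
have hx_ge0 : 0 <= h + x.
  have : `|h| < x by near: h; apply: dnbhs0_lt.
  by rewrite ltr_norml => /andP [? ?]; lra.
move: h_neq0; rewrite neq_lt => /orP [h_lt0|h_gt0].
- by rewrite nmulr_rle0 ?invr_lt0 // subr_ge0 f_dec //; lra.
- by rewrite pmulr_rle0 ?invr_gt0 // subr_le0 f_dec //; lra.
Unshelve. all: end_near. Qed.

End MaxAffine.

(** * Problem (P2) along a ray *)

Section P2Facts.
Variable R : realType.

Lemma pplus_ge0 (x : R) : 0 <= pplus x.
Proof. by rewrite /pplus le_max lexx orbT. Qed.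

Lemma pminus_ge0 (x : R) : 0 <= pminus x.
Proof. by rewrite /pminus le_max lexx orbT. Qed.

Lemma pplus_eq0 (x : R) : x <= 0 -> pplus x = 0.
Proof. exact: max_r. Qed.

Lemma pminus_eq0 (x : R) : 0 <= x -> pminus x = 0.
Proof. by move=> x_ge0; apply: max_r; rewrite oppr_le0. Qed.

Variables (T Ns : nat) (S0 : 'I_Ns -> R) (Pt : nat -> R).

Lemma feasibleP2_idle Sbar xbar : (forall i, 0 <= S0 i) ->
  (forall i, S0 i <= Sbar i) -> (forall i, 0 <= xbar i) ->
  feasibleP2 T S0 Sbar xbar Pt (fun i _ => S0 i).
Proof.
move=> S0_ge0 S0_le xbar_ge0; split=> // t _.
rewrite big1 => [|i _]; last exact: subrr.
have := pplus_ge0 (Pt t); have := pminus_ge0 (Pt t) => ? ?.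
split=> [i|]; last by split; lra.
have := S0_ge0 i; have := S0_le i; have := xbar_ge0 i.
by rewrite subrr => ? ? ?; do !split; lra.
Qed.

Lemma feasibleP2_mono Sbar xbar Sbar' xbar' s :
  (forall i, Sbar i <= Sbar' i) -> (forall i, xbar i <= xbar' i) ->
  feasibleP2 T S0 Sbar xbar Pt s -> feasibleP2 T S0 Sbar' xbar' Pt s.
Proof.
move=> le_Sbar le_xbar [s0 feas]; split=> // t t_in.
have [dev agg] := feas t t_in; split=> // i.
have := dev i; have := le_Sbar i; have := le_xbar i.
by move=> ? ? [[? ?] [[? ?] [? ?]]]; do !split; lra.
Qed.

Definition total_shortfall : R := \sum_(1 <= t < T.+1) pminus (Pt t).

Lemma objP2_ge Sbar xbar s : feasibleP2 T S0 Sbar xbar Pt s ->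
  - total_shortfall <= objP2 T s.
Proof.
move=> [_ feas]; rewrite /total_shortfall /objP2 -sumrN.
apply: ler_sum_nat => t t_in; have [_ [lo _]] := feas t t_in.
by rewrite le_min lo andbT oppr_le0 pminus_ge0.
Qed.

Definition short_hour t : R := if Pt t <= 0 then 1 else 0.

(* The aggregate constraint makes the objective linear: if [P_t <= 0] then
   [p_t^+ = 0] forces a discharge, otherwise [p_t^- = 0] forces a charge. *)
Lemma objP2_linear Sbar xbar s : feasibleP2 T S0 Sbar xbar Pt s ->
  objP2 T s = \sum_(1 <= t < T.+1) short_hour t * \sum_(i < Ns) (s i t - s i t.-1).
Proof.
move=> [_ feas]; apply: eq_big_nat => t t_in; have [_ [lo hi]] := feas t t_in.
rewrite /short_hour; have [P_le0|/ltW P_ge0] := leP (Pt t) 0.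
  by rewrite mul1r; apply: min_r; rewrite (le_trans hi) ?pplus_eq0.
by rewrite mul0r; apply: min_l; rewrite (le_trans _ lo) ?pminus_eq0 ?oppr0.
Qed.

End P2Facts.

Lemma inf_image_attained (R : realType) (X : Type) (F : set X) (g : X -> R) s :
  F s -> (forall s', F s' -> g s <= g s') -> inf [set g s | s in F] = g s.
Proof.
move=> Fs g_min; apply/eqP; rewrite eq_le; apply/andP; split.
  by apply: ge_inf; [exists (g s) => _ [s' Fs' <-]; apply: g_min | exists s].
by apply: lb_le_inf; [exists (g s), s | move=> _ [s' Fs' <-]; apply: g_min].
Qed.

Definition ray (R : realType) (Ns : nat) (p0 d : 'I_Ns -> R) (th : R) : 'I_Ns -> R :=
  fun j => p0 j + d j * th.

Lemma along_ray (R : realType) (Ns : nat) (p0 : 'I_Ns -> R) i c th :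
  along p0 i c th = ray p0 (fun j => if j == i then c else 0) th.
Proof.
by apply: funext => j; rewrite /along /ray; case: eqP => _ //; rewrite mul0r addr0.
Qed.

Section P2LinearProgram.
Variables (R : realType) (T Ns : nat) (S0 Sbar0 xbar0 dS dx : 'I_Ns -> R).
Variable Pt : nat -> R.

Local Notation V := ('I_Ns * nat)%type.
Local Notation feasible th := (feasibleP2 T S0 (ray Sbar0 dS th) (ray xbar0 dx th) Pt).

Definition lp_vars : seq V := [seq (i, t) | i <- enum 'I_Ns, t <- iota 0 T.+1].

Lemma lp_vars_uniq : uniq lp_vars.
Proof.
apply: allpairs_uniq; [exact: enum_uniq | exact: iota_uniq |].
by move=> [? ?] [? ?] _ _ [-> ->].
Qed.

Lemma mem_lp_vars i t : (t <= T)%N -> (i, t) \in lp_vars.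
Proof.
move=> t_le; apply: (allpairs_f (fun i t => (i, t))); first by rewrite mem_enum.
by rewrite mem_iota add0n ltnS.
Qed.

Definition schedule (x : V -> R) : 'I_Ns -> nat -> R := fun i t => x (i, t).

Definition unit_coef (w0 : V) : V -> R := fun w => (w == w0)%:R.

Definition step_coef i t : V -> R :=
  fun w => unit_coef (i, t) w - unit_coef (i, t.-1) w.

Definition total_step_coef t : V -> R := fun w => \sum_(i < Ns) step_coef i t w.

Definition obj_coef : V -> R :=
  fun w => \sum_(1 <= t < T.+1) short_hour Pt t * total_step_coef t w.

Definition init_cons i : seq (lincon R V) :=
  [:: LinCon (unit_coef (i, 0%N)) 0 0 (S0 i);
      LinCon (fun w => - unit_coef (i, 0%N) w) 0 0 (- S0 i)].

Definition device_cons t i : seq (lincon R V) :=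
  [:: LinCon (fun w => - unit_coef (i, t) w) 0 0 0;
      LinCon (unit_coef (i, t)) (- dS i) 0 (Sbar0 i);
      LinCon (fun w => - step_coef i t w) (- dx i) 0 (xbar0 i);
      LinCon (step_coef i t) (- dx i) 0 (xbar0 i);
      LinCon (fun w => - step_coef i t w) 0 0 (pminus (Pt t));
      LinCon (step_coef i t) 0 0 (pplus (Pt t))].

Definition hour_cons t : seq (lincon R V) :=
  LinCon (fun w => - total_step_coef t w) 0 0 (pminus (Pt t)) ::
  LinCon (total_step_coef t) 0 0 (pplus (Pt t)) ::
  List.flat_map (device_cons t) (enum 'I_Ns).

(* (P2) on the ray, with the parameter [th] entering only the storage and rate
   bounds, plus the constraint [objective <= z]. *)
Definition p2_system : seq (lincon R V) :=
  LinCon obj_coef 0 (-1) 0 ::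
  List.flat_map init_cons (enum 'I_Ns) ++ List.flat_map hour_cons (iota 1 T).

Section Evaluation.
Variable x : V -> R.

Lemma linform_unit i t : (t <= T)%N -> linform lp_vars (unit_coef (i, t)) x = x (i, t).
Proof.
move=> t_le; rewrite /linform (bigD1_seq (i, t)) ?mem_lp_vars ?lp_vars_uniq //=.
by rewrite /unit_coef eqxx mul1r big1 ?addr0 // => w /negbTE ->; rewrite mul0r.
Qed.

Lemma linform_step i t : (t <= T)%N ->
  linform lp_vars (step_coef i t) x = x (i, t) - x (i, t.-1).
Proof.
by move=> t_le; rewrite linformB !linform_unit // (leq_trans (leq_pred t) t_le).
Qed.

Lemma linform_total_step t : (t <= T)%N ->
  linform lp_vars (total_step_coef t) x = \sum_(i < Ns) (x (i, t) - x (i, t.-1)).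
Proof.
by move=> t_le; rewrite linform_sum; apply: eq_bigr => i _; rewrite linform_step.
Qed.

Lemma linform_obj : linform lp_vars obj_coef x =
  \sum_(1 <= t < T.+1) short_hour Pt t * \sum_(i < Ns) (x (i, t) - x (i, t.-1)).
Proof.
rewrite linform_sum; apply: eq_big_nat => t /andP [_ t_lt].
by rewrite linformZ linform_total_step.
Qed.

Lemma init_cons_sat i th z :
  system_sat lp_vars (init_cons i) th z x = (x (i, 0%N) = S0 i).
Proof.
rewrite !system_sat_cons system_sat_nil /lincon_sat /= linformN !linform_unit //.
apply/propext; split=> [[? [? _]]|->]; last by do !split; lra.
by apply/eqP; rewrite eq_le; apply/andP; split; lra.
Qed.

Lemma device_cons_sat t i th z : (t <= T)%N ->
  system_sat lp_vars (device_cons t i) th z x =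
  ((0 <= x (i, t) /\ x (i, t) <= ray Sbar0 dS th i) /\
   (- ray xbar0 dx th i <= x (i, t) - x (i, t.-1) /\
    x (i, t) - x (i, t.-1) <= ray xbar0 dx th i) /\
   (- pminus (Pt t) <= x (i, t) - x (i, t.-1) /\
    x (i, t) - x (i, t.-1) <= pplus (Pt t))).
Proof.
move=> t_le; rewrite !system_sat_cons system_sat_nil /lincon_sat /=.
rewrite !linformN linform_unit ?linform_step // /ray.
by apply/propext; split=> [[? [? [? [? [? [? _]]]]]]|[[? ?] [[? ?] [? ?]]]]; do !split; lra.
Qed.

Lemma hour_cons_sat t th z : (1 <= t <= T)%N ->
  system_sat lp_vars (hour_cons t) th z x =
  ((forall i, (0 <= x (i, t) /\ x (i, t) <= ray Sbar0 dS th i) /\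
     (- ray xbar0 dx th i <= x (i, t) - x (i, t.-1) /\
      x (i, t) - x (i, t.-1) <= ray xbar0 dx th i) /\
     (- pminus (Pt t) <= x (i, t) - x (i, t.-1) /\
      x (i, t) - x (i, t.-1) <= pplus (Pt t))) /\
   - pminus (Pt t) <= \sum_(i < Ns) (x (i, t) - x (i, t.-1)) /\
   \sum_(i < Ns) (x (i, t) - x (i, t.-1)) <= pplus (Pt t)).
Proof.
move=> /andP [_ t_le]; rewrite !system_sat_cons system_sat_flat_map /lincon_sat /=.
rewrite linformN !linform_total_step //; apply/propext; split.
  move=> [lo [hi devs]]; split; last by split; lra.
  by move=> i; have := devs i (mem_enum _ i); rewrite device_cons_sat.
move=> [devs [lo hi]]; split; first lra.
by split=> [|i _]; [lra | rewrite device_cons_sat].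
Qed.

Lemma p2_system_sat th z : system_sat lp_vars p2_system th z x <->
  feasible th (schedule x) /\ objP2 T (schedule x) <= z.
Proof.
rewrite system_sat_cons system_sat_cat !system_sat_flat_map /lincon_sat /= linform_obj.
split=> [[obj_le [inits hours]]|[feas obj_le]].
  have feas : feasible th (schedule x).
    split=> [i|t t_in]; first by have := inits i (mem_enum _ i); rewrite init_cons_sat.
    by have := hours t; rewrite mem_iota add1n ltnS hour_cons_sat //; apply.
  by split=> //; rewrite (objP2_linear feas); lra.
have [inits hours] := feas; split; first by move: obj_le; rewrite (objP2_linear feas); lra.
split=> [i _|t]; first by rewrite init_cons_sat; apply: inits.
by rewrite mem_iota add1n ltnS => t_in; rewrite hour_cons_sat //; apply: hours.
Qed.

End Evaluation.

Definition projected_system : seq (lincon R V) := fm_elim lp_vars p2_system.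

Lemma projected_system_sat th s : feasible th s ->
  forall c, List.In c projected_system -> coef_th c * th + coef_z c * objP2 T s <= bound c.
Proof.
move=> feas c c_in.
have [|x sat] := (fm_elim_sat p2_system th (objP2 T s) lp_vars_uniq).1.
  by exists (fun w => s w.1 w.2); apply/p2_system_sat.
by have := sat c c_in; rewrite /lincon_sat linform_nil add0r.
Qed.

(* A projected constraint with [coef_z c < 0] bounds the objective from below
   by the line [piece c]; the constant bound [- total_shortfall] keeps the list
   of pieces nonempty. *)
Definition piece (c : lincon R V) : R * R := (- coef_th c / coef_z c, bound c / coef_z c).

Definition value_pieces : seq (R * R) :=
  (0, - total_shortfall T Pt) ::
  List.map piece (List.filter (fun c => coef_z c < 0) projected_system).

Lemma aff_piece_le c th M : coef_z c < 0 ->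
  (aff (piece c) th <= M) = (coef_th c * th + coef_z c * M <= bound c).
Proof.
move=> cz_lt0; have -> : aff (piece c) th = (bound c - coef_th c * th) / coef_z c.
  by rewrite /aff /= mulrBl; ring.
by rewrite ler_ndivrMr // lerBrDr addrC [M * _]mulrC.
Qed.

Lemma piece_in_value_pieces c : List.In c projected_system -> coef_z c < 0 ->
  piece c \in value_pieces.
Proof.
move=> c_in cz_lt0; rewrite inE; apply/orP; right.
by apply/In_mem/List.in_map_iff; exists c; rewrite List.filter_In.
Qed.

Lemma value_pieces_le th s p : feasible th s -> p \in value_pieces -> aff p th <= objP2 T s.
Proof.
move=> feas; rewrite inE => /orP [/eqP ->|].
  by rewrite /aff mul0r add0r; exact: objP2_ge feas.
move=> /In_mem /List.in_map_iff [c [<- /List.filter_In [c_in cz_lt0]]].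
by rewrite aff_piece_le // projected_system_sat.
Qed.

Hypotheses (S0_ge0 : forall i, 0 <= S0 i) (S0_le : forall i, S0 i <= Sbar0 i).
Hypotheses (xbar0_ge0 : forall i, 0 <= xbar0 i).
Hypotheses (dS_ge0 : forall i, 0 <= dS i) (dx_ge0 : forall i, 0 <= dx i).

Lemma feasible_ray_mono th1 th2 s : th1 <= th2 -> feasible th1 s -> feasible th2 s.
Proof.
by move=> le12; apply: feasibleP2_mono => i; rewrite /ray lerD2l ler_wpM2l.
Qed.

Lemma feasible_ray_idle th : 0 <= th -> feasible th (fun i _ => S0 i).
Proof.
move=> th_ge0; apply: (feasible_ray_mono th_ge0).
by apply: feasibleP2_idle => // i; rewrite /ray mulr0 addr0.
Qed.

(* The best line at [th] satisfies the projected system, hence lifts back to a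
   feasible schedule whose objective it bounds from above. *)
Lemma optP2_ray_attained th : 0 <= th ->
  exists2 s, feasible th s & exists2 p, p \in value_pieces & objP2 T s = aff p th.
Proof.
move=> th_ge0; have idle := feasible_ray_idle th_ge0.
have [p p_in p_max] := @seq_argmax _ _ (fun p => aff p th) value_pieces isT.
have proj_sat : system_sat [::] projected_system th (aff p th) (fun=> 0).
  move=> c c_in; rewrite /lincon_sat linform_nil add0r.
  have [cz_lt0|cz_gt0|cz0] := ltgtP (coef_z c) 0.
  - by rewrite -aff_piece_le // p_max // piece_in_value_pieces.
  - apply: le_trans (projected_system_sat idle c_in).
    by rewrite lerD2l ler_wpM2l ?(ltW cz_gt0) ?value_pieces_le.
  - by have := projected_system_sat idle c_in; rewrite cz0 !mul0r !addr0.
have [x sat] := (fm_elim_sat p2_system th (aff p th) lp_vars_uniq).2 (ex_intro _ _ proj_sat).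
have [feas obj_le] := (p2_system_sat x th (aff p th)).1 sat.
exists (schedule x) => //; exists p => //.
by apply/eqP; rewrite eq_le obj_le value_pieces_le.
Qed.

Lemma optP2_ray_eq th s p : feasible th s -> p \in value_pieces -> objP2 T s = aff p th ->
  optP2 T S0 (ray Sbar0 dS th) (ray xbar0 dx th) Pt = objP2 T s.
Proof.
move=> feas p_in obj_eq; apply: inf_image_attained => // s' feas'.
by rewrite obj_eq value_pieces_le.
Qed.

Lemma optP2_ray_max_of_lines :
  max_of_lines (fun th => optP2 T S0 (ray Sbar0 dS th) (ray xbar0 dx th) Pt) value_pieces.
Proof.
split=> th th_ge0; have [s feas [p p_in obj_eq]] := optP2_ray_attained th_ge0;
  rewrite /= (optP2_ray_eq feas p_in obj_eq).
  by move=> q q_in; apply: value_pieces_le feas q_in.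
by exists p.
Qed.

Lemma optP2_ray_nonincreasing th1 th2 : 0 <= th1 -> th1 <= th2 ->
  optP2 T S0 (ray Sbar0 dS th2) (ray xbar0 dx th2) Pt <=
  optP2 T S0 (ray Sbar0 dS th1) (ray xbar0 dx th1) Pt.
Proof.
move=> th1_ge0 le12; have th2_ge0 := le_trans th1_ge0 le12.
have [s1 feas1 [p1 p1_in obj1]] := optP2_ray_attained th1_ge0.
have [s2 feas2 [p2 p2_in obj2]] := optP2_ray_attained th2_ge0.
rewrite (optP2_ray_eq feas1 p1_in obj1) (optP2_ray_eq feas2 p2_in obj2) obj2.
exact: value_pieces_le (feasible_ray_mono le12 feas1) p2_in.
Qed.

End P2LinearProgram.

Section EUEAlongRay.
Variables (R : realType) (T Ns N : nat) (P : 'I_N -> nat -> R).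
Variables (S0 Sbar0 xbar0 dS dx : 'I_Ns -> R).
Hypotheses (S0_ge0 : forall i, 0 <= S0 i) (S0_le : forall i, S0 i <= Sbar0 i).
Hypotheses (xbar0_ge0 : forall i, 0 <= xbar0 i).
Hypotheses (dS_ge0 : forall i, 0 <= dS i) (dx_ge0 : forall i, 0 <= dx i).

Lemma EUE_ray_max_affine :
  max_affine (fun th => EUE T S0 (ray Sbar0 dS th) (ray xbar0 dx th) P).
Proof.
rewrite /EUE; apply: max_affine_scale; first by rewrite invr_ge0 ler0n.
apply: max_affine_sum => k; apply: max_affine_add; first exact: max_affine_cst.
by eexists; apply: optP2_ray_max_of_lines.
Qed.

Lemma EUE_ray_nonincreasing th1 th2 : 0 <= th1 -> th1 <= th2 ->
  EUE T S0 (ray Sbar0 dS th2) (ray xbar0 dx th2) P <=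
  EUE T S0 (ray Sbar0 dS th1) (ray xbar0 dx th1) P.
Proof.
move=> th1_ge0 le12; rewrite ler_wpM2l ?invr_ge0 ?ler0n //.
by apply: ler_sum => k _; rewrite lerD2l optP2_ray_nonincreasing.
Qed.

End EUEAlongRay.

Theorem theorem2 (R : realType) (T Ns N : nat)
  (P : 'I_N -> nat -> R) (S0 Sbar0 xbar0 : 'I_Ns -> R) :
  (1 <= T)%N -> (1 <= Ns)%N -> (1 <= N)%N ->
  (forall i, 0 <= S0 i) ->
  (forall i, S0 i <= Sbar0 i) ->
  (forall i, 0 <= xbar0 i) ->
  (* (P2) is always feasible *)
  (forall (Sbar xbar : 'I_Ns -> R) (Pt : nat -> R),
      (forall i, S0 i <= Sbar i) -> (forall i, 0 <= xbar i) ->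
      exists s, feasibleP2 T S0 Sbar xbar Pt s) /\
  (* EUE along any admissible ray of one device's parameters *)
  (forall (i : 'I_Ns) (a b : R), 0 <= a -> 0 <= b -> (a != 0) || (b != 0) ->
    let f := fun theta : R =>
      EUE T S0 (along Sbar0 i a theta) (along xbar0 i b theta) P in
    {within [set theta : R | 0 <= theta], continuous f} /\
    piecewise_linear_nonneg f /\
    (forall th1 th2 : R, 0 <= th1 -> th1 <= th2 -> f th2 <= f th1) /\
    (* MRI = - dEUE/dQC is nonnegative wherever it exists *)
    (forall theta : R, 0 < theta -> derivable f theta 1 ->
       0 <= - (derive1 f theta))).
Proof.
move=> _ _ _ S0_ge0 S0_le xbar0_ge0.
split=> [Sbar xbar Pt S0_le' xbar_ge0|i a b a_ge0 b_ge0 _ f].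
  by exists (fun i _ => S0 i); apply: feasibleP2_idle.
pose dir c : 'I_Ns -> R := fun j => if j == i then c else 0.
have dir_ge0 c : 0 <= c -> forall j, 0 <= dir c j by move=> c_ge0 j; rewrite /dir; case: ifP.
have fE : f = fun th => EUE T S0 (ray Sbar0 (dir a) th) (ray xbar0 (dir b) th) P.
  by apply: funext => th; rewrite /f !along_ray.
have f_max : max_affine f by rewrite fE; apply: EUE_ray_max_affine => //; exact: dir_ge0.
have f_dec th1 th2 : 0 <= th1 -> th1 <= th2 -> f th2 <= f th1.
  by rewrite fE; apply: EUE_ray_nonincreasing => //; exact: dir_ge0.
split; first exact: max_affine_continuous.
split; first exact: max_affine_piecewise_linear.
split=> // th th_gt0 df; rewrite oppr_ge0.
exact: nonincreasing_derive1_le0.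
Qed.
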